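(* Let $m\ge1$ and $l\ge1$ be integers. For every $k=0,1,\dots,m$, \[ \left(\prod_{\substack{p\le m\\ p\text{ prime}}}p^{\lfloor m/p\rfloor v_p(l!)-v_p(l)}\right)^{-1}B^*_{k,0}(t)\in\mathbb{Z}[t]. \]
   Context: $v_p$ is the $p$-adic valuation. For $k=0,\dots,m$ let $l^{(k)}_h=l$ for $h\ne k$ and $l^{(k)}_k=l-1$ ($h=0,\dots,m$), and $L=(m+1)l-1$. For $j,k\in\{0,\dots,m\}$ define $\sigma^{(k,j)}_i$ by $\prod_{h=0}^m(h-j-w)^{l^{(k)}_h}=\sum_{i=0}^L\sigma^{(k,j)}_iw^i$, and \[ B^*_{k,j}(t)=\frac{1}{(l-1)!}\sum_{i=0}^{L}t^{L-i}\,i!\,\sigma^{(k,j)}_i \] (equivalently $B^*_{k,j}(t)=\frac{t^{L+1}}{(l-1)!}\int_0^\infty e^{-yt}\prod_{h=0}^m(h-j-y)^{l^{(k)}_h}\,dy$ for $t>0$). *)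

From HB Require Import structures.
From mathcomp Require Import all_boot all_order all_algebra.
Set Implicit Arguments. Unset Strict Implicit. Unset Printing Implicit Defensive.
Import Order.TTheory GRing.Theory Num.Theory.
Local Open Scope ring_scope.

Definition lexp (l k h : nat) : nat := if h == k then (l - 1)%N else l.

Definition Lpar (m l : nat) : nat := ((m.+1 * l) - 1)%N.

Definition sigma_poly (m l k j : nat) : {poly rat} :=
  \prod_(h < m.+1) ((h%:R - j%:R)%:P - 'X) ^+ lexp l k h.

Definition sigma (m l k j i : nat) : rat := (sigma_poly m l k j)`_i.

Definition Bstar (m l k j : nat) : {poly rat} :=
  ((l - 1)`!%:R)^-1 *:
    \sum_(i < (Lpar m l).+1) ((i`!)%:R * sigma m l k j i) *: 'X^(Lpar m l - i).

Definition Dfac (m l : nat) : rat :=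
  \prod_(p < m.+1 | prime p)
     (p%:R : rat) ^ ((m %/ p * logn p l`!)%:Z - (logn p l)%:Z).

From HB Require Import structures.
From mathcomp Require Import all_boot all_order all_algebra.
From mathcomp Require Import zify ring.
Set Implicit Arguments. Unset Strict Implicit. Unset Printing Implicit Defensive.
Import Order.TTheory GRing.Theory Num.Theory.

(* Say that c divides the factorial coefficients of a polynomial Q when c
   divides every i! [w^i] Q.  Since
     i! [w^i] (Q R) = \sum_j 'C(i, j) (j! [w^j] Q) ((i - j)! [w^(i-j)] R),
   such divisors multiply along products.  For Q = (h - w)^n the factorial
   coefficients are +-n^_i h^(n-i); when p | h they are all divisible by
   p^(v_p(n!)), because n^_i = n! / (n-i)! and v_p((n-i)!) <= n - i.
   In sigma^{(k,0)} = \prod_h (h - w)^(l_h), a prime p thus gains v_p(l!) from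
   each of the m/p + 1 multiples h of p in [0, m] other than k, and v_p((l-1)!)
   from h = k if p | k; the total is at least the exponent of p in (l-1)! times the
   product of the theorem.  The coefficients of B*_{k,0} are the numbers
   i! sigma_i / (l-1)!, so dividing by that product leaves integers. *)

Lemma sum_divn_expn_bound p n K : 1 < p ->
  \sum_(1 <= k < K.+1) n %/ p ^ k + n %/ p ^ K <= n.
Proof.
move=> p_gt1; elim: K => [|K IH]; first by rewrite big_geq // expn0 divn1.
rewrite big_nat_recr //= expnSr divnMA.
have : 2 * (n %/ p ^ K %/ p) <= n %/ p ^ K.
  by apply: leq_trans (leq_divM _ p); rewrite mulnC leq_mul2l p_gt1 orbT.
lia.
Qed.

Lemma logn_fact_leq p n : prime p -> logn p n`! <= n.
Proof.
move=> p_pr; rewrite logn_fact //.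
exact: leq_trans (leq_addr _ _) (@sum_divn_expn_bound p n n (prime_gt1 p_pr)).
Qed.

Lemma logn_factS p n : logn p n.+1`! = logn p n`! + logn p n.+1.
Proof. by rewrite factS lognM ?fact_gt0 // addnC. Qed.

Lemma logn_prod p I (r : seq I) (P : pred I) (F : I -> nat) :
  (forall i, P i -> 0 < F i) ->
  logn p (\prod_(i <- r | P i) F i) = \sum_(i <- r | P i) logn p (F i).
Proof.
move=> F_gt0; elim: r => [|i r IH]; first by rewrite !big_nil logn1.
rewrite !big_cons; case: ifP => // Pi.
by rewrite lognM ?F_gt0 ?IH ?prodn_cond_gt0.
Qed.

Lemma sum_dvdn_const p m c : \sum_(0 <= h < m.+1 | p %| h) c = (m %/ p).+1 * c.
Proof.
rewrite big_mkcond /= -(eq_bigr _ (fun h _ => mulnbl (p %| h) c)) -big_distrl /=.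
by rewrite big_ltn // dvdn0 -divn_count_dvd.
Qed.

(* [n ^_ j * h ^ (n - j)] is [|j! [w^j] (h - w)^n|]. *)
Definition fact_coef_gcd (n h : nat) : nat :=
  \big[gcdn/0]_(j < n.+1) (n ^_ j * h ^ (n - j)).

Lemma fact_coef_gcd_dvd n h j : fact_coef_gcd n h %| n ^_ j * h ^ (n - j).
Proof.
have [j_le_n | n_lt_j] := leqP j n; last by rewrite ffact_small.
exact: (biggcdn_inf (Ordinal (j_le_n : j < n.+1))).
Qed.

Lemma fact_coef_gcd_gt0 n h : 0 < fact_coef_gcd n h.
Proof.
have := fact_coef_gcd_dvd n h n; rewrite subnn muln1 ffactnn.
by apply: dvdn_gt0; exact: fact_gt0.
Qed.

Lemma pfactor_fact_dvd_gcd p n h :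
  prime p -> p %| h -> p ^ logn p n`! %| fact_coef_gcd n h.
Proof.
move=> p_pr p_dvd_h; apply/dvdn_biggcdP => -[j /=]; rewrite ltnS => j_le_n _.
rewrite -(ffact_fact j_le_n) lognM ?fact_gt0 ?ffact_gt0 // expnD.
apply: dvdn_mul; first exact: pfactor_dvdnn.
apply: dvdn_trans (dvdn_exp2r _ p_dvd_h).
by rewrite dvdn_exp2l ?logn_fact_leq.
Qed.

Lemma pfactor_dvd_prod_gcd p m (n : nat -> nat) : prime p ->
  p ^ (\sum_(0 <= h < m.+1 | p %| h) logn p (n h)`!)
    %| \prod_(0 <= h < m.+1) fact_coef_gcd (n h) h.
Proof.
move=> p_pr; rewrite expn_sum [X in _ %| X](bigID (dvdn p)) /= dvdn_mulr //.
by elim/big_ind2: _ => // [* | h]; [exact: dvdn_mul | exact: pfactor_fact_dvd_gcd].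
Qed.

Lemma sum_logn_fact_lexp p m l k : k <= m ->
  \sum_(0 <= h < m.+1 | p %| h) logn p (lexp l.+1 k h)`! + (p %| k) * logn p l.+1
    = (m %/ p).+1 * logn p l.+1`!.
Proof.
move=> k_le_m.
have delta_k :
    \sum_(0 <= h < m.+1 | p %| h) (h == k) * logn p l.+1 = (p %| k) * logn p l.+1.
  rewrite (eq_bigr _ (fun h _ => mulnbl _ _)) -big_mkcondr big_nat1_cond_eq.
  by rewrite ltnS k_le_m mulnbl; case: (p %| k).
rewrite -sum_dvdn_const -delta_k -big_split; apply: eq_bigr => h _.
by rewrite /lexp subn1 logn_factS; case: eqP => _ /=; rewrite ?logn_factS ?mul1n ?addn0.
Qed.

(* The exponent of [p] in [Dfac m l], truncated at [0]; only [p > m] truncates. *)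
Definition dfac_exp (m l p : nat) : nat := m %/ p * logn p l`! - logn p l.

Definition dfac_nat (m l : nat) : nat := \prod_(p < m.+1 | prime p) p ^ dfac_exp m l p.

Lemma dfac_nat_gt0 m l : 0 < dfac_nat m l.
Proof. by apply: prodn_cond_gt0 => p p_pr; rewrite expn_gt0 prime_gt0. Qed.

Lemma logn_dfac_nat m l q : prime q -> logn q (dfac_nat m l) = dfac_exp m l q.
Proof.
move=> q_pr; rewrite logn_prod => [|p p_pr]; last by rewrite expn_gt0 prime_gt0.
under eq_bigr => p p_pr do rewrite lognX logn_prime // mulnbr eq_sym.
rewrite -big_mkcondr -(big_mkord (fun p => prime p && (p == q))).
rewrite big_nat1_cond_eq q_pr andbT.
by case: ltnP => // m_lt_q; rewrite /dfac_exp divn_small.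
Qed.

Lemma dvdn_fact_dfac_prod_gcd m l k : k <= m ->
  l`! * dfac_nat m l.+1 %| \prod_(0 <= h < m.+1) fact_coef_gcd (lexp l.+1 k h) h.
Proof.
move=> k_le_m; apply/dvdn_partP => [|p].
  by rewrite muln_gt0 fact_gt0 dfac_nat_gt0.
rewrite mem_primes p_part => /andP[p_pr _].
apply: dvdn_trans (@pfactor_dvd_prod_gcd p m (lexp l.+1 k) p_pr).
rewrite dvdn_exp2l ?prime_gt1 //.
rewrite lognM ?fact_gt0 ?dfac_nat_gt0 // logn_dfac_nat // /dfac_exp.
have := @sum_logn_fact_lexp p m l k k_le_m; have := logn_factS p l; rewrite mulSn.
move: (m %/ p * _) => c; case: (p %| k); rewrite ?mul1n ?mul0n; lia.
Qed.

Local Open Scope ring_scope.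

Lemma coef_CsubX_exp (R : comNzRingType) (a : R) n j :
  ((a%:P - 'X) ^+ n)`_j = (-1) ^+ j * a ^+ (n - j) *+ 'C(n, j).
Proof.
have term i : a%:P ^+ (n - i) * (- 'X) ^+ i = ((-1) ^+ i * a ^+ (n - i))%:P * 'X^i.
  by rewrite polyCM !polyC_exp polyCN exprNn; ring.
rewrite exprDn coef_sum.
under eq_bigr => i _ do
  rewrite term coefMn coefCM coefXn mulr_natr mulrb (fun_if (fun x => x *+ _)) mul0rn eq_sym.
rewrite -big_mkcond (big_ord1_eq _ (fun i => (-1) ^+ i * a ^+ (n - i) *+ 'C(n, i))) ltnS.
by case: leqP => // n_lt_j; rewrite bin_small // mulr0n.
Qed.

Section FactorialCoefficients.

Variable R : archiNumFieldType.

(* For [c = 0] the condition holds trivially, since [x / 0 = 0]. *)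
Definition fact_coefs_dvd (c : nat) (Q : {poly R}) :=
  forall i, i`!%:R * Q`_i / c%:R \is a Num.int.

Lemma fact_coefs_dvd1 : fact_coefs_dvd 1 1.
Proof. by move=> i; rewrite coef1 divr1 rpredM ?rpred_nat. Qed.

Lemma fact_coefs_dvdM c1 c2 Q1 Q2 :
  fact_coefs_dvd c1 Q1 -> fact_coefs_dvd c2 Q2 -> fact_coefs_dvd (c1 * c2)%N (Q1 * Q2).
Proof.
move=> dvdQ1 dvdQ2 i.
have [-> | c1_gt0] := posnP c1; first by rewrite mul0n invr0 mulr0 rpred0.
have [-> | c2_gt0] := posnP c2; first by rewrite muln0 invr0 mulr0 rpred0.
rewrite coefM mulr_sumr mulr_suml; apply: rpred_sum => -[j /=]; rewrite ltnS => j_le_i _.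
have -> : i`!%:R * (Q1`_j * Q2`_(i - j)) / (c1 * c2)%:R = 'C(i, j)%:R *
    (j`!%:R * Q1`_j / c1%:R) * ((i - j)`!%:R * Q2`_(i - j) / c2%:R) :> R.
  rewrite -(bin_fact j_le_i) !natrM; field.
  by rewrite !pnatr_eq0 -!lt0n c1_gt0 c2_gt0.
by apply: rpredM; [apply: rpredM; [exact: rpred_nat | exact: dvdQ1] | exact: dvdQ2].
Qed.

Lemma fact_coefs_dvd_prod I (r : seq I) (P : pred I) c (Q : I -> {poly R}) :
  (forall i, P i -> fact_coefs_dvd (c i) (Q i)) ->
  fact_coefs_dvd (\prod_(i <- r | P i) c i)%N (\prod_(i <- r | P i) Q i).
Proof.
move=> dvdQ; elim/big_rec2: _ => [|i c' Q' Pi dvdQ']; first exact: fact_coefs_dvd1.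
exact: fact_coefs_dvdM (dvdQ i Pi) dvdQ'.
Qed.

Lemma fact_coefs_dvd_trans c c' Q :
  (0 < c)%N -> (c' %| c)%N -> fact_coefs_dvd c Q -> fact_coefs_dvd c' Q.
Proof.
move=> c_gt0 c'_dvd_c dvdQ i; have c'_gt0 := dvdn_gt0 c_gt0 c'_dvd_c.
have -> : i`!%:R * Q`_i / c'%:R = i`!%:R * Q`_i / c%:R * (c %/ c')%:R.
  rewrite natr_div // ?unitfE ?pnatr_eq0 -?lt0n //; field.
  by rewrite !pnatr_eq0 -!lt0n c_gt0 c'_gt0.
by rewrite rpredM ?rpred_nat.
Qed.

Lemma fact_coefs_dvd_CsubX_exp n h :
  fact_coefs_dvd (fact_coef_gcd n h) ((h%:R%:P - 'X) ^+ n).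
Proof.
move=> i; have G_neq0 : (fact_coef_gcd n h)%:R != 0 :> R.
  by rewrite pnatr_eq0 -lt0n fact_coef_gcd_gt0.
have -> : i`!%:R * ((h%:R%:P - 'X) ^+ n)`_i / (fact_coef_gcd n h)%:R
    = (-1) ^+ i * ((n ^_ i * h ^ (n - i)) %/ fact_coef_gcd n h)%:R :> R.
  rewrite coef_CsubX_exp natr_div ?fact_coef_gcd_dvd ?unitfE //.
  by rewrite -bin_ffact !natrM natrX -mulr_natr; field.
by rewrite rpredM ?rpred_nat ?rpredX ?rpredN ?rpred1.
Qed.

End FactorialCoefficients.

Lemma fact_coefs_dvd_sigma_poly m l k :
  fact_coefs_dvd (\prod_(0 <= h < m.+1) fact_coef_gcd (lexp l k h) h)%N
    (sigma_poly m l k 0).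
Proof.
rewrite big_mkord; apply: fact_coefs_dvd_prod => h _.
by rewrite subr0; exact: fact_coefs_dvd_CsubX_exp.
Qed.

Lemma Dfac_natE m l : Dfac m l.+1 = (dfac_nat m l.+1)%:R.
Proof.
rewrite /Dfac /dfac_nat natr_prod; apply: eq_bigr => p p_pr.
rewrite natrX /dfac_exp subzn -?exprnP //.
apply: (@leq_trans (logn p (l.+1)`!)); first by rewrite logn_factS leq_addl.
by rewrite leq_pmull // divn_gt0 ?prime_gt0 // -ltnS.
Qed.

Theorem theorem6p1 (m l : nat) (hm : (1 <= m)%N) (hl : (1 <= l)%N) (k : nat) (hk : (k <= m)%N) :
  forall i : nat, exists z : int, ((Dfac m l)^-1 *: Bstar m l k 0) `_ i = z%:~R.
Proof.
case: l hl => // l _ i; apply/intrP.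
have dvd_sigma : fact_coefs_dvd (l`! * dfac_nat m l.+1)%N (sigma_poly m l.+1 k 0).
  apply: fact_coefs_dvd_trans (fact_coefs_dvd_sigma_poly m l.+1 k).
    by rewrite prodn_gt0 // => h; exact: fact_coef_gcd_gt0.
  exact: dvdn_fact_dfac_prod_gcd.
rewrite /Bstar Dfac_natE subn1 /= !coefZ coef_sum mulrA -invfM -natrM mulr_sumr.
apply: rpred_sum => j _; rewrite coefZ coefXn mulrA rpredM ?rpred_nat //.
by rewrite mulrC mulnC; exact: dvd_sigma.
Qed.
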